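(* Let $U$ be a unitary operator on a Hilbert space $K$, and let $\mathcal{L}$ and $\mathcal{L}'$ be finite-dimensional wandering subspaces for $U$. Set $$M(\mathcal{L}) := \bigoplus_{n=-\infty}^{\infty} U^n\mathcal{L}, \qquad M(\mathcal{L}') := \bigoplus_{n=-\infty}^{\infty} U^n\mathcal{L}'.$$ Then, writing $P_S$ for the orthogonal projection onto a closed subspace $S$, $$\operatorname{tr}(P_{\mathcal{L}} P_{M(\mathcal{L}')}) = \operatorname{tr}(P_{\mathcal{L}'} P_{M(\mathcal{L})}).$$
   Context: A closed subspace $\mathcal{S}$ of $K$ is a wandering subspace for the unitary $U$ if the subspaces $U^n\mathcal{S}$, $n\in\mathbb{Z}$, are pairwise orthogonal. The direct sums above are orthogonal direct sums (closed linear spans). *)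

From HB Require Import structures.
From mathcomp Require Import all_boot all_order all_algebra.
From mathcomp Require Import complex.
From mathcomp Require Import all_classical all_reals all_analysis.
Import numFieldNormedType.Exports.
Import Order.TTheory GRing.Theory Num.Theory.

Set Implicit Arguments.
Unset Strict Implicit.
Unset Printing Implicit Defensive.

Local Open Scope classical_set_scope.
Local Open Scope ring_scope.
Local Open Scope complex_scope.

Section Hilbert.
Variable R : realType.
Variable V : completeNormedModType R[i].
Implicit Types (ip : V -> V -> R[i]) (S : set V) (U : V -> V).

(* ip is an inner product (linear in the first variable, conjugate
   symmetric) inducing the norm of V; V being complete, (V, ip) is a
   complex Hilbert space. *)
Definition inner_product ip : Prop :=
  [/\ forall (a : R[i]) (x y z : V), ip (a *: x + y) z = a * ip x z + ip y z,
      forall x y : V, ip y x = (ip x y)^* &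
      forall x : V, ip x x = `|x| ^+ 2].

Definition unitary ip U : Prop :=
  [/\ forall (a : R[i]) (x y : V), U (a *: x + y) = a *: U x + U y,
      bijective U &
      forall x y : V, ip (U x) (U y) = ip x y].

Definition span S : set V :=
  [set x | exists (n : nat) (v : 'I_n -> V) (c : 'I_n -> R[i]),
     (forall i, S (v i)) /\ x = \sum_(i < n) c i *: v i].

Definition closed_subspace S : Prop :=
  [/\ S 0, (forall (a : R[i]) (x y : V), S x -> S y -> S (a *: x + y))
    & closed S].

Definition finite_dim S : Prop :=
  exists s : seq V, S = span [set x | x \in s].

(* U^n S for n : int (U^-m S is the preimage of S under U^m, i.e. the
   image of S under (U^-1)^m since U is bijective) *)
Definition upow_set U (n : int) S : set V :=
  match n with
  | Posz m => iter m U @` S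
  | Negz m => iter m.+1 U @^-1` S
  end.

Definition wandering ip U S : Prop :=
  closed_subspace S /\
  forall n m : int, n != m -> forall x y : V,
    upow_set U n S x -> upow_set U m S y -> ip x y = 0.

Definition Mspace U S : set V :=
  closure (span [set x | exists n : int, upow_set U n S x]).

Definition oproj ip S (x : V) : V :=
  xget 0 [set p | S p /\ forall y, S y -> ip (x - p) y = 0].

Definition orthonormal ip (e : seq V) : Prop :=
  forall i j : nat, (i < size e)%N -> (j < size e)%N ->
    ip e`_i e`_j = (i == j)%:R.

Definition range_onb ip (T : V -> V) (e : seq V) : Prop :=
  orthonormal ip e /\
  forall x, exists c : 'I_(size e) -> R[i], T x = \sum_(i < size e) c i *: e`_i.

(* Trace of a finite-rank operator T: sum_k <T e_k, e_k> over an orthonormal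
   basis e of a finite-dimensional subspace containing the range of T
   (extend e to an orthonormal basis of V: the remaining terms vanish). *)
Definition trace ip (T : V -> V) : R[i] :=
  let e := xget [::] (range_onb ip T) in
  \sum_(k < size e) ip (T e`_k) e`_k.

End Hilbert.

(** Let (f_j) be an orthonormal basis of L'.  Because L' is wandering, the
vectors U^n f_j (n in Z) are orthonormal, and by Bessel's inequality the
partial sums of sum_{n,j} <x, U^n f_j> U^n f_j form a Cauchy sequence whose
limit is the orthogonal projection of x onto M(L').  If (e_k) is an
orthonormal basis of L, the trace of P_L P_M(L') is therefore the limit of
sum_{|n| <= N} sum_{j,k} |<U^n f_j, e_k>|^2.  Since U is unitary,
<U^n f_j, e_k> = <f_j, U^-n e_k>, so after the change of index n -> -n these
truncated sums are symmetric in (L, e) and (L', f). *)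

From Pilot Require Import Defs.
From HB Require Import structures.
From mathcomp Require Import all_boot all_order all_algebra.
From mathcomp Require Import complex.
From mathcomp Require Import all_classical all_reals all_analysis.
From mathcomp Require Import ring zify.
Import numFieldNormedType.Exports.
Import Order.TTheory GRing.Theory Num.Theory.
Local Open Scope classical_set_scope.
Local Open Scope ring_scope.
Local Open Scope complex_scope.

Set Implicit Arguments.
Unset Strict Implicit.
Unset Printing Implicit Defensive.

(* [normCK] and [rmorphM] with [conjc] in place of [Num.conj], which rewriting
   does not identify with it. *)
Section ComplexConjugate.
Variable R : rcfType.
Implicit Types a b : R[i].

Lemma normcK a : `|a| ^+ 2 = a * conjc a.
Proof. exact: normCK. Qed.

Lemma conjcM a b : conjc (a * b) = conjc a * conjc b.
Proof. exact: rmorphM. Qed.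

End ComplexConjugate.

Section InnerProduct.
Variables (R : realType) (V : completeNormedModType R[i]) (ip : V -> V -> R[i]).
Hypothesis Hip : inner_product ip.

Lemma ipZDl a x y z : ip (a *: x + y) z = a * ip x z + ip y z.
Proof. by case: Hip. Qed.

Lemma ipC x y : ip y x = conjc (ip x y).
Proof. by case: Hip. Qed.

Lemma ipxx x : ip x x = `|x| ^+ 2.
Proof. by case: Hip. Qed.

Lemma ip0l z : ip 0 z = 0.
Proof.
have := ipZDl 1 0 0 z; rewrite scale1r addr0 mul1r => h.
by apply/(addrI (ip 0 z)); rewrite addr0 -h.
Qed.

Lemma ipDl x y z : ip (x + y) z = ip x z + ip y z.
Proof. by rewrite -[x]scale1r ipZDl mul1r scale1r. Qed.

Lemma ipZl a x z : ip (a *: x) z = a * ip x z.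
Proof. by rewrite -[a *: x]addr0 ipZDl ip0l addr0. Qed.

Lemma ipNl x z : ip (- x) z = - ip x z.
Proof. by rewrite -scaleN1r ipZl mulN1r. Qed.

Lemma ipBl x y z : ip (x - y) z = ip x z - ip y z.
Proof. by rewrite ipDl ipNl. Qed.

Lemma ip0r z : ip z 0 = 0.
Proof. by rewrite ipC ip0l conjc0. Qed.

Lemma ipDr x y z : ip z (x + y) = ip z x + ip z y.
Proof. by rewrite ipC ipDl (ipC x z) (ipC y z) rmorphD. Qed.

Lemma ipZr a x z : ip z (a *: x) = conjc a * ip z x.
Proof. by rewrite ipC ipZl (ipC x z) conjcM. Qed.

Lemma ipNr x z : ip z (- x) = - ip z x.
Proof. by rewrite ipC ipNl (ipC x z) rmorphN. Qed.

Lemma ipBr x y z : ip z (x - y) = ip z x - ip z y.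
Proof. by rewrite ipDr ipNr. Qed.

Lemma ip_suml (I : Type) (r : seq I) (P : pred I) (F : I -> V) z :
  ip (\sum_(i <- r | P i) F i) z = \sum_(i <- r | P i) ip (F i) z.
Proof. by apply: (big_morph (ip^~ z)) => [x y|]; rewrite ?ipDl ?ip0l. Qed.

Lemma ip_sumr (I : Type) (r : seq I) (P : pred I) (F : I -> V) z :
  ip z (\sum_(i <- r | P i) F i) = \sum_(i <- r | P i) ip z (F i).
Proof. by apply: (big_morph (ip z)) => [x y|]; rewrite ?ipDr ?ip0r. Qed.

Lemma ipxx_ge0 x : 0 <= ip x x.
Proof. by rewrite ipxx exprn_ge0. Qed.

Lemma ipxx_eq0 x : ip x x = 0 -> x = 0.
Proof. by rewrite ipxx => /eqP; rewrite sqrf_eq0 normr_eq0 => /eqP. Qed.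

Lemma normr_ip_le x y : `|ip x y| <= `|x| * `|y|.
Proof.
have [->|y0] := eqVneq y 0; first by rewrite ip0r !normr0 mulr0.
set c := ip y y.
have c0 : c != 0 by apply/eqP => /ipxx_eq0; apply/eqP.
have cc : conjc c = c by rewrite /c -ipC.
set t := ip x y / c; set z := x - t *: y.
have zy : ip z y = 0 by rewrite /z ipBl ipZl /t -/c mulfVK // subrr.
have yz : ip y z = 0 by rewrite ipC zy conjc0.
have ipxxE : ip x x = ip z z + t * conjc t * c.
  have -> : x = z + t *: y by rewrite /z subrK.
  by clearbody z; rewrite ipDl !ipDr !ipZl !ipZr zy yz -/c; ring.
have sq_le : `|ip x y| ^+ 2 <= (`|x| * `|y|) ^+ 2.
  rewrite exprMn -!ipxx -/c.
  have -> : `|ip x y| ^+ 2 = t * conjc t * c * c.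
    by rewrite normcK /t conjcM conjc_inv cc; field.
  by rewrite ipxxE mulrDl lerDr mulr_ge0 // ipxx_ge0.
by rewrite -(ler_pXn2r (n:=2)) // ?nnegrE // mulr_ge0.
Qed.

Lemma cvg_ipl (u : nat -> V) p w : u @ \oo --> p ->
  (fun N => (ip (u N) w : R[i]^o)) @ \oo --> (ip p w : R[i]^o).
Proof.
move=> hu; apply/cvgrPdist_lt => e e0.
set c := `|w| + 1.
have c0 : 0 < c by rewrite /c ltr_pwDr.
have [N0 _ H] := (cvgrPdist_lt _ _).1 hu (e / c) (divr_gt0 e0 c0).
exists N0 => // N /H hN.
rewrite -ipBl; apply: le_lt_trans (normr_ip_le _ _) _.
rewrite -[e](@divfK _ c) ?gt_eqF //.
apply: (@le_lt_trans _ _ (`|p - u N| * c)).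
  by apply: ler_wpM2l => //; rewrite /c lerDl.
by rewrite ltr_pM2r.
Qed.

Lemma oprojE (S : set V) x p : S p -> (forall y, S y -> ip (x - p) y = 0) ->
  oproj ip S x = p.
Proof.
move=> Sp hp; rewrite /oproj; case: xgetP => [q _ [Sq hq]|]; last first.
  by move=> /(_ p) []; split.
have pq_orth y : S y -> ip (p - q) y = 0.
  move=> Sy; have -> : p - q = (x - q) - (x - p) by rewrite opprB [RHS]addrC [RHS]addrA subrK.
  by rewrite ipBl hq // hp // subrr.
apply/eqP; rewrite eq_sym -subr_eq0; apply/eqP; apply: ipxx_eq0.
by rewrite ipBr !pq_orth // subrr.
Qed.

End InnerProduct.

Lemma norm_le_gt0_eq0 (R : numFieldType) (a : R) :
  (forall e, 0 < e -> `|a| <= e) -> a = 0.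
Proof.
move=> h; apply/eqP; apply/negPn/negP => a0.
have na : 0 < `|a| by rewrite normr_gt0.
have := h (`|a| / 2) (divr_gt0 na (ltr0n _ 2)).
by rewrite ler_pdivlMr ?ltr0n // -{2}[`|a|]mulr1 ler_pM2l // lt_geF // ltr1n.
Qed.

Section Span.
Variables (R : realType) (V : completeNormedModType R[i]).
Implicit Types S E : set V.

Definition lin_closed E := E 0 /\ forall (a : R[i]) x y, E x -> E y -> E (a *: x + y).

Lemma lin_closed_sum E (I : Type) (r : seq I) (P : pred I) (F : I -> V) :
  lin_closed E -> (forall i, P i -> E (F i)) -> E (\sum_(i <- r | P i) F i).
Proof.
move=> [E0 El] EF; apply: big_ind => // x y Ex Ey.
by rewrite -[x]scale1r; apply: El.
Qed.

Lemma lin_closedZ E a x : lin_closed E -> E x -> E (a *: x).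
Proof. by move=> [E0 El] Ex; rewrite -[_ *: _]addr0; apply: El. Qed.

Lemma span_min S E : lin_closed E -> S `<=` E -> Defs.span S `<=` E.
Proof.
move=> hE SE x [n [v [c [Sv ->]]]]; apply: lin_closed_sum => // i _.
by apply: lin_closedZ => //; apply: SE.
Qed.

Lemma sub_span S : S `<=` Defs.span S.
Proof.
move=> x Sx; exists 1%N, (fun=> x), (fun=> 1); split => //.
by rewrite big_ord1 scale1r.
Qed.

Lemma span_mono S S' : S `<=` S' -> Defs.span S `<=` Defs.span S'.
Proof. by move=> SS x [n [v [c [Sv ->]]]]; exists n, v, c; split => // i; apply: SS. Qed.

Lemma lin_closed_span S : lin_closed (Defs.span S).
Proof.
split; first by exists 0%N, (fun=> 0), (fun=> 0); split; [case | rewrite big_ord0].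
move=> a x y [n1 [v1 [c1 [S1 ->]]]] [n2 [v2 [c2 [S2 ->]]]].
exists (n1 + n2)%N, (fun i => match fintype.split i with inl j => v1 j | inr j => v2 j end),
  (fun i => match fintype.split i with inl j => a * c1 j | inr j => c2 j end); split.
  by move=> i; case: (fintype.split i).
rewrite big_split_ord /= scaler_sumr; congr (_ + _); apply: eq_bigr => i _.
  by rewrite (unsplitK (inl _)) scalerA.
by rewrite (unsplitK (inr _)).
Qed.

End Span.

Section FiniteOrthonormal.
Variables (R : realType) (V : completeNormedModType R[i]) (ip : V -> V -> R[i]).
Hypothesis Hip : inner_product ip.
Implicit Types (e s : seq V) (S : set V).

Definition onproj e x : V := \sum_(k < size e) ip x e`_k *: e`_k.

Definition onb_of e S :=
  [/\ Defs.orthonormal ip e, forall k, (k < size e)%N -> S e`_k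
    & forall y, S y -> y = onproj e y].

Lemma ip_onb_comb e (c : 'I_(size e) -> R[i]) (j : 'I_(size e)) :
  Defs.orthonormal ip e -> ip (\sum_(k < size e) c k *: e`_k) e`_j = c j.
Proof.
move=> oe; rewrite (ip_suml Hip) (bigD1 j) //= big1 => [|k kj].
  by rewrite (ipZl Hip) oe // eqxx mulr1 addr0.
by rewrite (ipZl Hip) oe // (_ : (k == j :> nat) = false) ?mulr0 //; apply/negbTE.
Qed.

Lemma onproj_comb e (c : 'I_(size e) -> R[i]) :
  Defs.orthonormal ip e ->
  onproj e (\sum_(k < size e) c k *: e`_k) = \sum_(k < size e) c k *: e`_k.
Proof. by move=> oe; apply: eq_bigr => k _; rewrite ip_onb_comb. Qed.

Lemma onprojZD e a x y : onproj e (a *: x + y) = a *: onproj e x + onproj e y.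
Proof.
rewrite /onproj scaler_sumr -big_split /=; apply: eq_bigr => k _.
by rewrite (ipZDl Hip) scalerDl scalerA.
Qed.

Lemma lin_closed_onproj_fixed e : lin_closed (fun y => y = onproj e y).
Proof.
split; first by rewrite /onproj big1 // => k _; rewrite (ip0l Hip) scale0r.
by move=> a x y hx hy; rewrite onprojZD -hx -hy.
Qed.

Lemma ip_onproj e a b : ip (onproj e a) b = ip a (onproj e b).
Proof.
rewrite (ip_suml Hip) (ip_sumr Hip); apply: eq_bigr => k _.
by rewrite (ipZl Hip) (ipZr Hip) (ipC Hip b e`_k) mulrC.
Qed.

Lemma ip_sub_onproj e x j : Defs.orthonormal ip e -> (j < size e)%N ->
  ip (x - onproj e x) e`_j = 0.
Proof.
move=> oe je; rewrite (ipBl Hip).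
by rewrite (ip_onb_comb (fun k => ip x e`_k) (Ordinal je)) // subrr.
Qed.

Lemma ip_onproj_fixed_eq0 e z y : (forall j, (j < size e)%N -> ip z e`_j = 0) ->
  y = onproj e y -> ip z y = 0.
Proof.
move=> hz ->; rewrite (ip_sumr Hip) big1 // => k _.
by rewrite (ipZr Hip) hz // mulr0.
Qed.

Lemma oproj_onb S e x : lin_closed S -> onb_of e S -> oproj ip S x = onproj e x.
Proof.
move=> linS [oe eS Se]; apply: (oprojE Hip).
  by apply: lin_closed_sum => // k _; apply: lin_closedZ => //; apply: eS.
by move=> y /Se; apply: ip_onproj_fixed_eq0 => j je; apply: ip_sub_onproj.
Qed.

Lemma orthonormal_rcons e u : Defs.orthonormal ip e ->
  (forall j, (j < size e)%N -> ip u e`_j = 0) -> ip u u = 1 ->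
  Defs.orthonormal ip (rcons e u).
Proof.
move=> oe ue uu i j; rewrite size_rcons !ltnS !nth_rcons => hi hj.
have [ilt|ige] := ltnP i (size e); have [jlt|jge] := ltnP j (size e).
- exact: oe.
- have -> : j = size e by apply/eqP; rewrite eqn_leq hj jge.
  by rewrite eqxx (ipC Hip) ue // conjc0 ltn_eqF.
- have -> : i = size e by apply/eqP; rewrite eqn_leq hi ige.
  by rewrite eqxx ue // eq_sym ltn_eqF.
- have -> : i = size e by apply/eqP; rewrite eqn_leq hi ige.
  have -> : j = size e by apply/eqP; rewrite eqn_leq hj jge.
  by rewrite eqxx uu.
Qed.

Lemma sum_rcons e u (c : nat -> R[i]) :
  \sum_(k < size (rcons e u)) c k *: (rcons e u)`_k =
  \sum_(k < size e) c k *: e`_k + c (size e) *: u.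
Proof.
rewrite size_rcons big_ord_recr /= nth_rcons ltnn eqxx; congr (_ + _).
by apply: eq_bigr => k _; rewrite nth_rcons ltn_ord.
Qed.

Lemma onproj_rcons e u y : Defs.orthonormal ip (rcons e u) -> y = onproj e y ->
  y = onproj (rcons e u) y.
Proof.
move=> oeu hy; pose c k := if (k < size e)%N then ip y e`_k else 0.
have yE : y = \sum_(k < size (rcons e u)) c k *: (rcons e u)`_k.
  rewrite sum_rcons /c ltnn scale0r addr0 {1}hy.
  by apply: eq_bigr => k _; rewrite ltn_ord.
by rewrite yE (onproj_comb (fun k => c k)).
Qed.

Lemma onb_of_span_cons e s v : onb_of e (Defs.span [set` s]) ->
  exists e', onb_of e' (Defs.span [set` v :: s]).
Proof.
move=> [oe es se].
have sub : Defs.span [set` s] `<=` Defs.span [set` v :: s].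
  by apply: span_mono => x /= xs; rewrite inE xs orbT.
have lin_vs := lin_closed_span [set` v :: s].
have onproj_vs : Defs.span [set` v :: s] (onproj e v).
  by apply: lin_closed_sum => // k _; apply: lin_closedZ => //; apply/sub/es.
set w := v - onproj e v.
have [w0|wn0] := eqVneq w 0.
  exists e; split => // [k ke|]; first exact/sub/es.
  apply: span_min; first exact: lin_closed_onproj_fixed.
  move=> x /=; rewrite inE => /orP[/eqP ->|xs]; last exact/se/sub_span.
  by apply/eqP; rewrite -subr_eq0 -/w w0.
have nw : `|w| != 0 by rewrite normr_eq0.
set u := `|w|^-1 *: w.
have oeu : Defs.orthonormal ip (rcons e u).
  apply: orthonormal_rcons => // [j je|].
    by rewrite (ipZl Hip) ip_sub_onproj // mulr0.
  by rewrite (ipxx Hip) normrZ normfV normr_id mulVf // expr1n.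
exists (rcons e u); split => //.
  move=> k; rewrite size_rcons ltnS nth_rcons leq_eqVlt => /orP[/eqP ->|ke].
    rewrite ltnn eqxx; apply: lin_closedZ => //.
    rewrite /w -scaleN1r addrC; apply: lin_vs.2 => //.
    by apply: sub_span; rewrite /= inE eqxx.
  by rewrite ke; apply/sub/es.
apply: span_min; first exact: lin_closed_onproj_fixed.
move=> x /=; rewrite inE => /orP[/eqP ->|xs]; last exact/onproj_rcons/se/sub_span.
pose c k := if (k < size e)%N then ip v e`_k else `|w|.
have vE : v = \sum_(k < size (rcons e u)) c k *: (rcons e u)`_k.
  rewrite sum_rcons /c ltnn /u scalerA mulfV // scale1r.
  rewrite (eq_bigr (fun k : 'I_(size e) => ip v e`_k *: e`_k)) => [|k _].
    by rewrite addrC subrK.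
  by rewrite ltn_ord.
by rewrite vE (onproj_comb (fun k => c k)).
Qed.

Lemma sum_ip_onproj e g v : onproj e v = onproj g (onproj e v) ->
  \sum_(i < size g) ip g`_i v * ip v (onproj e g`_i) = ip (onproj e v) v.
Proof.
move=> fixed; rewrite [in RHS]fixed (ip_suml Hip); apply: eq_bigr => i _.
by rewrite (ipZl Hip) -ip_onproj mulrC.
Qed.

Lemma gram_schmidt s : exists e, onb_of e (Defs.span [set` s]).
Proof.
elim: s => [|v s [e]]; last exact: onb_of_span_cons.
exists [::]; split => //; apply: span_min; first exact: lin_closed_onproj_fixed.
by move=> x /=; rewrite in_nil.
Qed.

End FiniteOrthonormal.

Section UnitaryPowers.
Variables (R : realType) (V : completeNormedModType R[i]) (ip : V -> V -> R[i]).
Variables (U Ui : V -> V).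
Hypothesis UZD : forall (a : R[i]) x y, U (a *: x + y) = a *: U x + U y.
Hypothesis Uip : forall x y, ip (U x) (U y) = ip x y.
Hypothesis UK : cancel U Ui.
Hypothesis UiK : cancel Ui U.

Lemma UiZD a x y : Ui (a *: x + y) = a *: Ui x + Ui y.
Proof. by apply: (can_inj UK); rewrite UZD !UiK. Qed.

Lemma Uiip x y : ip (Ui x) (Ui y) = ip x y.
Proof. by rewrite -Uip !UiK. Qed.

Lemma iterZD (F : V -> V) m : (forall a x y, F (a *: x + y) = a *: F x + F y) ->
  forall a x y, iter m F (a *: x + y) = a *: iter m F x + iter m F y.
Proof. by move=> FZD; elim: m => [//|m IH] a x y; rewrite !iterS IH FZD. Qed.

Lemma iter_ip (F : V -> V) m : (forall x y, ip (F x) (F y) = ip x y) ->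
  forall x y, ip (iter m F x) (iter m F y) = ip x y.
Proof. by move=> Fip; elim: m => [//|m IH] x y; rewrite !iterS Fip IH. Qed.

Lemma can_iter (F G : V -> V) m : cancel F G -> cancel (iter m F) (iter m G).
Proof. by move=> FG; elim: m => [//|m IH] x; rewrite iterSr iterS FG IH. Qed.

(* [U ^ n] for [n : int], where [Negz m] stands for [-(m + 1)]. *)
Definition upow (n : int) : V -> V :=
  match n with Posz m => iter m U | Negz m => iter m.+1 Ui end.

Lemma upowZD n a x y : upow n (a *: x + y) = a *: upow n x + upow n y.
Proof. by case: n => m; apply: iterZD => //; apply: UiZD. Qed.

Lemma upow0 n : upow n 0 = 0.
Proof.
have := upowZD n 1 0 0; rewrite !scale1r addr0 => h.
by apply/(addrI (upow n 0)); rewrite addr0 -h.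
Qed.

Lemma upowD n x y : upow n (x + y) = upow n x + upow n y.
Proof. by rewrite -{1}[x]scale1r upowZD scale1r. Qed.

Lemma upowZ n a x : upow n (a *: x) = a *: upow n x.
Proof. by rewrite -[a *: x]addr0 upowZD upow0 addr0. Qed.

Lemma upow_sum n (I : Type) (r : seq I) (P : pred I) (F : I -> V) :
  upow n (\sum_(i <- r | P i) F i) = \sum_(i <- r | P i) upow n (F i).
Proof. by apply: (big_morph (upow n)) => [x y|]; rewrite ?upowD ?upow0. Qed.

Lemma upow_ip n x y : ip (upow n x) (upow n y) = ip x y.
Proof. by case: n => m; apply: iter_ip => //; apply: Uiip. Qed.

Lemma upowNK n : cancel (upow (- n)) (upow n).
Proof.
case: n => [[|m]|m] y; [by [] | exact: (can_iter m.+1 UiK) | exact: (can_iter m.+1 UK)].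
Qed.

Lemma upow_adj n x y : ip (upow n x) y = ip x (upow (- n) y).
Proof. by rewrite -{1}(upowNK n y) upow_ip. Qed.

Lemma upow_set_upow (S : set V) n y : S y -> upow_set U n S (upow n y).
Proof.
case: n => m Sy; first by exists y.
by change (S (iter m.+1 U (iter m.+1 Ui y))); rewrite (can_iter m.+1 UiK).
Qed.

Lemma upow_setP (S : set V) n z : upow_set U n S z -> exists2 y, S y & z = upow n y.
Proof.
case: n => m; first by move=> [y Sy <-]; exists y.
by move=> Sz; exists (iter m.+1 U z) => //; exact/esym/(can_iter m.+1 UK).
Qed.

End UnitaryPowers.

Section WanderingBasis.
Variables (R : realType) (V : completeNormedModType R[i]) (ip : V -> V -> R[i]).
Hypothesis Hip : inner_product ip.
Variables (U Ui : V -> V).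
Hypothesis UZD : forall (a : R[i]) x y, U (a *: x + y) = a *: U x + U y.
Hypothesis Uip : forall x y, ip (U x) (U y) = ip x y.
Hypothesis UK : cancel U Ui.
Hypothesis UiK : cancel Ui U.
Variables (L : set V) (f : seq V).
Hypothesis Lw : wandering ip U L.
Hypothesis fL : onb_of ip f L.

Local Notation upow := (upow U Ui).

Definition wvec n j := upow n f`_j.

Lemma ip_wvec n m j l : (j < size f)%N -> (l < size f)%N ->
  ip (wvec n j) (wvec m l) = ((n == m) && (j == l))%:R.
Proof.
have [fon fL' _] := fL; move=> jf lf; have [<-|nm] := eqVneq n m.
  by rewrite /wvec (upow_ip Uip UiK) fon.
by apply: Lw.2 nm _ _ (upow_set_upow UiK n (fL' _ jf)) (upow_set_upow UiK m (fL' _ lf)).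
Qed.

(* [zidx N] enumerates the exponents [-N <= n <= N] by [t < 2 N + 1]. *)
Definition zidx (N t : nat) : int := t%:Z - N%:Z.

Definition psum (N : nat) x : V :=
  \sum_(t < (N + N).+1) \sum_(j < size f)
    ip x (wvec (zidx N t) j) *: wvec (zidx N t) j.

Lemma ip_psum_wvec N x n j : (absz n <= N)%N -> (j < size f)%N ->
  ip (psum N x) (wvec n j) = ip x (wvec n j).
Proof.
move=> nN jf.
have tnP : (absz (n + N%:Z)%R < (N + N).+1)%N by lia.
rewrite /psum (ip_suml Hip) (bigD1 (Ordinal tnP)) //= [X in _ + X]big1 ?addr0.
  rewrite (ip_suml Hip) (bigD1 (Ordinal jf)) //= [X in _ + X]big1 ?addr0.
    rewrite (ipZl Hip) ip_wvec // (_ : zidx N _ = n) ?eqxx ?mulr1 //.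
    by rewrite /zidx; lia.
  move=> l lj; rewrite (ipZl Hip) ip_wvec //.
  by rewrite (_ : (l == j :> nat) = false) ?andbF ?mulr0 //; apply/negbTE.
move=> t tn; rewrite (ip_suml Hip) big1 // => l _.
rewrite (ipZl Hip) ip_wvec // (_ : (zidx N t == n) = false) ?mulr0 //.
apply/negbTE; apply: contra tn => /eqP tnE; apply/eqP/val_inj => /=.
by move: tnE; rewrite /zidx; lia.
Qed.

Lemma zidx_rev N (t : 'I_(N + N).+1) : zidx N (rev_ord t) = - zidx N t.
Proof. by rewrite /zidx /=; have := ltn_ord t; lia. Qed.

Lemma zidx_le N (t : 'I_(N + N).+1) : (absz (zidx N t) <= N)%N.
Proof. by rewrite /zidx; have := ltn_ord t; lia. Qed.

Lemma ip_psum_psum K M x : (M <= K)%N ->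
  ip (psum K x) (psum M x) = ip (psum M x) (psum M x).
Proof.
move=> MK; rewrite [in LHS]/psum [in RHS]/psum !(ip_sumr Hip).
apply: eq_bigr => t _; rewrite !(ip_sumr Hip); apply: eq_bigr => j _.
by rewrite !(ipZr Hip) !ip_psum_wvec // (leq_trans (zidx_le t)).
Qed.

Lemma ip_sub_psum_wvec N x n j : (absz n <= N)%N -> (j < size f)%N ->
  ip (x - psum N x) (wvec n j) = 0.
Proof. by move=> nN jf; rewrite (ipBl Hip) ip_psum_wvec // subrr. Qed.

Lemma ip_sub_psum_psum N x : ip (x - psum N x) (psum N x) = 0.
Proof.
rewrite {2}/psum (ip_sumr Hip) big1 // => t _; rewrite (ip_sumr Hip) big1 // => j _.
by rewrite (ipZr Hip) ip_sub_psum_wvec ?mulr0 // zidx_le.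
Qed.

Lemma bessel N x : ip (psum N x) (psum N x) <= ip x x.
Proof.
have orth := ip_sub_psum_psum N x.
set s := psum N x in orth *; set d := x - s in orth *.
have -> : ip x x = ip d d + ip s s.
  have -> : x = d + s by rewrite /d subrK.
  clearbody s d; rewrite (ipDl Hip) !(ipDr Hip) orth.
  by rewrite [ip s d](ipC Hip) orth conjc0 addr0 add0r.
by rewrite lerDr ipxx_ge0.
Qed.

Lemma ip_psumB M N x : (M <= N)%N ->
  ip (psum N x - psum M x) (psum N x - psum M x) =
  ip (psum N x) (psum N x) - ip (psum M x) (psum M x).
Proof.
move=> MN; have NM := ip_psum_psum x MN.
have MN' : ip (psum M x) (psum N x) = ip (psum M x) (psum M x).
  by rewrite (ipC Hip) NM -(ipC Hip).
rewrite !(ipBl Hip) !(ipBr Hip) NM MN'; ring.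
Qed.

Lemma psum_norm_mono x : {homo (fun N => ip (psum N x) (psum N x)) : M N / (M <= N)%N >-> M <= N}.
Proof. by move=> M N MN; rewrite -subr_ge0 -ip_psumB // ipxx_ge0. Qed.

Lemma cvg_psum x : cvg (psum ^~ x @ \oo).
Proof.
apply: cauchy_cvg; apply: cauchy_exP => eps eps_gt0.
pose rho N := complex.Re (ip (psum N x) (psum N x)).
have rhoE N : ip (psum N x) (psum N x) = (rho N)%:C.
  by rewrite RRe_real // ger0_real // ipxx_ge0.
have rho_mono : {homo rho : M N / (M <= N)%N >-> M <= N}.
  by move=> M N MN; move: (psum_norm_mono x MN); rewrite !rhoE lecR.
have rho_ub : has_ubound (range rho).
  exists (complex.Re (ip x x)) => _ [N _ <-].
  by rewrite -lecR -rhoE RRe_real ?ger0_real ?ipxx_ge0 ?bessel.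
have rho_cvg := nondecreasing_cvgn rho_mono rho_ub.
set l := sup (range rho) in rho_cvg.
have rho_le N : rho N <= l by apply: ub_le_sup rho_ub _ _; exists N.
set r := complex.Re eps.
have epsE : eps = r%:C by rewrite RRe_real // gtr0_real.
have r_gt0 : 0 < r by rewrite -ltcR -epsE.
have [N0 _ hN0] := (cvgrPdist_lt _ _).1 rho_cvg (r ^+ 2) (exprn_gt0 2 r_gt0).
exists (psum N0 x); exists N0 => // N hN.
rewrite -ball_normE /ball_ /= distrC -(ltr_pXn2r (n:=2)) ?nnegrE ?(ltW eps_gt0) //.
rewrite -(ipxx Hip) ip_psumB // !rhoE epsE -rmorphB -rmorphXn ltcR.
apply: le_lt_trans (hN0 N0 (leqnn N0)).
by rewrite (le_trans _ (ler_norm _)) // lerD2r rho_le.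
Qed.

Definition mproj x := lim (psum ^~ x @ \oo).

Lemma mproj_cvg x : psum ^~ x @ \oo --> mproj x.
Proof. exact: cvg_psum. Qed.

Let W := [set y | exists n : int, upow_set U n L y].

Lemma W_wvec n j : (j < size f)%N -> W (wvec n j).
Proof. by case: fL => _ fL' _ jf; exists n; apply: upow_set_upow => //; apply: fL'. Qed.

Lemma Mspace_wvec n j : (j < size f)%N -> Mspace U L (wvec n j).
Proof. by move=> jf; apply/subset_closure/sub_span/W_wvec. Qed.

Lemma Mspace_psum N x : Mspace U L (psum N x).
Proof.
apply: subset_closure; apply: lin_closed_sum => [|t _]; first exact: lin_closed_span.
apply: lin_closed_sum => [|j _]; first exact: lin_closed_span.
by apply: lin_closedZ; [exact: lin_closed_span | apply/sub_span/W_wvec].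
Qed.

Lemma Mspace_mproj x : Mspace U L (mproj x).
Proof.
have := @closed_cvg _ _ _ _ (psum ^~ x) (Mspace U L) (@closed_closure _ _)
  (nearW _ (Mspace_psum ^~ x)) (mproj x) (@mproj_cvg x).
exact.
Qed.

Lemma ip_sub_mproj_wvec x n j : (j < size f)%N -> ip (x - mproj x) (wvec n j) = 0.
Proof.
move=> jf; apply: norm_le_gt0_eq0 => e e_gt0.
set c := `|wvec n j| + 1.
have c_gt0 : 0 < c by rewrite /c ltr_pwDr.
have [N1 _ hN1] := (cvgrPdist_lt _ _).1 (@mproj_cvg x) (e / c) (divr_gt0 e_gt0 c_gt0).
set N := maxn N1 (absz n).
have -> : x - mproj x = (x - psum N x) + (psum N x - mproj x) by rewrite addrA subrK.
rewrite (ipDl Hip) ip_sub_psum_wvec ?add0r ?leq_maxr //.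
apply: le_trans (normr_ip_le Hip _ _) _.
rewrite -[e](@divfK _ c) ?gt_eqF // ler_pM //; last by rewrite /c lerDl.
by rewrite distrC ltW // hN1 //= leq_maxl.
Qed.

Lemma ip_sub_mproj x y : Mspace U L y -> ip (x - mproj x) y = 0.
Proof.
set z := x - mproj x.
have lin_orth : lin_closed (fun y => ip z y = 0).
  split; first exact: ip0r.
  by move=> a y1 y2 h1 h2; rewrite (ipDr Hip) (ipZr Hip) h1 h2 mulr0 addr0.
have span_orth : Defs.span W `<=` (fun y => ip z y = 0).
  apply: span_min => // w [n /upow_setP-/(_ Ui UK) [y0 Ly0 ->]].
  have [_ _ Lf] := fL; rewrite (Lf _ Ly0) /onproj (upow_sum UZD UK UiK).
  rewrite (ip_sumr Hip) big1 // => k _.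
  by rewrite (upowZ UZD UK UiK) (ipZr Hip) ip_sub_mproj_wvec ?mulr0.
move=> My; apply: norm_le_gt0_eq0 => e e_gt0.
set c := `|z| + 1.
have c_gt0 : 0 < c by rewrite /c ltr_pwDr.
have [y' [Sy' y'_near]] := My _ (nbhsx_ballx y _ (divr_gt0 e_gt0 c_gt0)).
move: y'_near; rewrite -ball_normE /ball_ /= => y'_near.
have -> : y = (y - y') + y' by rewrite subrK.
rewrite (ipDr Hip) (span_orth y' Sy') addr0.
apply: le_trans (normr_ip_le Hip _ _) _.
rewrite -[e](@divfK _ c) ?gt_eqF // mulrC.
by apply: ler_pM => //; [exact: ltW | rewrite /c lerDl].
Qed.

Lemma oproj_Mspace x : oproj ip (Mspace U L) x = mproj x.
Proof. exact: (oprojE Hip (@Mspace_mproj x) (@ip_sub_mproj x)). Qed.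

Lemma oproj_Mspace_wvec n j : (j < size f)%N -> oproj ip (Mspace U L) (wvec n j) = wvec n j.
Proof.
by move=> jf; apply: (oprojE Hip (@Mspace_wvec n j jf)) => y _; rewrite subrr (ip0l Hip).
Qed.

Definition trunc_trace (e : seq V) N :=
  \sum_(t < (N + N).+1) \sum_(j < size f) \sum_(k < size e)
    ip (wvec (zidx N t) j) e`_k * ip e`_k (wvec (zidx N t) j).

Lemma cvg_trunc_trace e : Defs.orthonormal ip e ->
  (fun N => trunc_trace e N : R[i]^o) @ \oo -->
  (trace ip (onproj ip e \o oproj ip (Mspace U L)) : R[i]^o).
Proof.
move=> eon; set T := onproj ip e \o oproj ip (Mspace U L).
rewrite /trace; case: xgetP => [g _ [gon gT]|]; last first.
  by move=> /(_ e) []; split => // x; exists (fun k => ip (oproj ip (Mspace U L) x) e`_k).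
have wvec_fixed n j : (j < size f)%N ->
    onproj ip e (wvec n j) = onproj ip g (onproj ip e (wvec n j)).
  move=> jf; have [c cE] := gT (wvec n j).
  by move: cE; rewrite /T /= oproj_Mspace_wvec // => ->; rewrite onproj_comb.
have truncE N : trunc_trace e N = \sum_(i < size g) ip (psum N g`_i) (onproj ip e g`_i).
  rewrite /trunc_trace /psum; under [RHS]eq_bigr do rewrite (ip_suml Hip).
  rewrite [RHS]exchange_big; apply: eq_bigr => t _ /=.
  under [RHS]eq_bigr do rewrite (ip_suml Hip).
  rewrite [RHS]exchange_big; apply: eq_bigr => j _ /=.
  under [RHS]eq_bigr do rewrite (ipZl Hip).
  rewrite (sum_ip_onproj Hip (wvec_fixed _ _ (ltn_ord j))) [in RHS]/onproj (ip_suml Hip).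
  by apply: eq_bigr => k _; rewrite (ipZl Hip).
have -> : \sum_(i < size g) ip (T g`_i) g`_i =
    \sum_(i < size g) ip (mproj g`_i) (onproj ip e g`_i).
  by apply: eq_bigr => i _; rewrite /T /= oproj_Mspace ip_onproj.
under eq_fun do rewrite truncE.
apply: cvg_big => [|i _]; first exact: add_continuous.
exact: (cvg_ipl Hip (@mproj_cvg _)).
Qed.

End WanderingBasis.

Lemma trunc_traceC (R : realType) (V : completeNormedModType R[i])
    (ip : V -> V -> R[i]) (Hip : inner_product ip) (U Ui : V -> V)
    (Uip : forall x y, ip (U x) (U y) = ip x y) (UK : cancel U Ui) (UiK : cancel Ui U)
    (e f : seq V) N :
  trunc_trace ip U Ui f e N = trunc_trace ip U Ui e f N.
Proof.
rewrite /trunc_trace (reindex_inj rev_ord_inj) /=; apply: eq_bigr => t _.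
rewrite exchange_big; apply: eq_bigr => k _; apply: eq_bigr => j _.
rewrite /wvec zidx_rev (upow_adj Uip UK UiK) opprK [ip e`_k _](ipC Hip).
by rewrite (upow_adj Uip UK UiK) opprK mulrC -(ipC Hip).
Qed.

Theorem lemma5 (R : realType) (V : completeNormedModType R[i])
  (ip : V -> V -> R[i]) (Hip : inner_product ip)
  (U : V -> V) (HU : unitary ip U) (L L' : set V) :
  wandering ip U L -> finite_dim L ->
  wandering ip U L' -> finite_dim L' ->
  trace ip (oproj ip L \o oproj ip (Mspace U L')) =
  trace ip (oproj ip L' \o oproj ip (Mspace U L)).
Proof.
move=> Lw [s Ls] L'w [s' L's]; subst L L'.
case: HU => UZD [Ui UK UiK] Uip.
have [e eL] := gram_schmidt Hip s; have [f fL'] := gram_schmidt Hip s'.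
rewrite (funext (fun x => oproj_onb Hip x (lin_closed_span _) eL)).
rewrite (funext (fun x => oproj_onb Hip x (lin_closed_span _) fL')).
have [[eon _ _] [fon _ _]] := (eL, fL').
have hs : hausdorff_space R[i]^o := @norm_hausdorff _ _.
rewrite -(cvg_lim hs (cvg_trunc_trace Hip UZD Uip UK UiK L'w fL' eon)).
rewrite -(cvg_lim hs (cvg_trunc_trace Hip UZD Uip UK UiK Lw eL fon)).
by rewrite (funext (trunc_traceC Hip Uip UK UiK e f)).
Qed.
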